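(* Fix an integer $d\ge 2$. For any $n^*,m^*<\infty$ and $\varepsilon>0$ there exist constants $r_1>0$ and $C>0$ such that every pair of integers $n\ge d$, $m\ge2$ with $\sigma_{n,m}^2\ge r_1$ satisfies: (a) $n>n^*$ and $m>m^*$; (b) $n/m\le (1+\varepsilon)\log m$; (c) $\mu_{n,m}\le C\sigma_{n,m}^2$.
   Context: Uniform multinomial occupancy model: $n$ balls distributed independently and uniformly over $m$ urns; $Y_n$ is the number of urns with exactly $d$ balls; $\mu_{n,m}=EY_n=m\binom{n}{d}m^{-d}(1-1/m)^{n-d}$ and $\sigma_{n,m}^2=\mathrm{Var}(Y_n)=\mu_{n,m}+m(m-1)\frac{n!}{d!d!(n-2d)!}m^{-2d}(1-2/m)^{n-2d}-\mu_{n,m}^2$, with the middle term $0$ when $n<2d$. *)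

From Stdlib Require Import Reals Lra Lia Arith Factorial.
Open Scope R_scope.

Definition binomR (n d : nat) : R :=
  if (d <=? n)%nat then INR (fact n) / (INR (fact d) * INR (fact (n - d))) else 0.

Definition multi2R (n d : nat) : R :=
  if (2 * d <=? n)%nat
  then INR (fact n) / (INR (fact d) * INR (fact d) * INR (fact (n - 2 * d)))
  else 0.

(* mu_{n,m} = E Y_n = m C(n,d) m^{-d} (1 - 1/m)^{n-d} *)
Definition mu (d n m : nat) : R :=
  INR m * binomR n d * (/ INR m) ^ d * (1 - / INR m) ^ (n - d).

(* sigma^2_{n,m} = Var Y_n *)
Definition sigma2 (d n m : nat) : R :=
  mu d n m
  + INR m * (INR m - 1) * multi2R n d * (/ INR m) ^ (2 * d)
      * (1 - 2 / INR m) ^ (n - 2 * d)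
  - (mu d n m) ^ 2.

From Stdlib Require Import Reals Lra Lia Arith Factorial.
Open Scope R_scope.

(* Write lam = n/m and x = 1/m, and use sigma^2 = mu + E[Y (Y - 1)] - mu^2.
   (a), (b): crude upper bounds.  On the one hand mu <= n^d and
   E[Y (Y - 1)] <= n^{2d}, so n is large.  On the other hand, with the Poisson
   scale Q = m lam^d e^{-lam}, mu <= e^d Q and E[Y (Y - 1)] <= e^{2d} Q^2, so Q
   is large.  Since lam^d e^{-lam} <= d^d, this forces m to be large; and if
   lam > (1 + eps) ln m then m e^{-lam} <= e^{-c lam} with c = eps/(1 + eps),
   which bounds Q by (d/c)^d.
   (c): sigma^2 = mu (1 - R) with the deficit ratio R = mu - E[Y (Y - 1)]/mu.
   Bernoulli and exponential estimates of (1 - x)^k and (1 - 2x)^k give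
   d! R <= G(lam) + x K_d, where G(lam) = e^{-lam} lam^{d-1} ((lam - d)^2 + lam)
   is the Poisson limit of d! R and K_d is explicit.  A calculus argument shows
   G <= 0.9 d! uniformly, so R <= 0.95 once m is large, i.e. mu <= 20 sigma^2. *)

Lemma exp_le_mono a b : a <= b -> exp a <= exp b.
Proof. intros [H|H]; [left; now apply exp_increasing | right; now subst]. Qed.

Lemma exp_pow_INR a k : exp a ^ k = exp (INR k * a).
Proof.
  induction k as [|k IH]; simpl pow.
  - now rewrite Rmult_0_l, exp_0.
  - rewrite IH, <- exp_plus, S_INR. f_equal. ring.
Qed.

Lemma exp_mul_cancel a b : a + b = 0 -> exp a * exp b = 1.
Proof. intros Hab. rewrite <- exp_plus, Hab. apply exp_0. Qed.

Lemma pow_unit_interval a k : 0 <= a <= 1 -> 0 <= a ^ k <= 1.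
Proof.
  intros Ha. split; [now apply pow_le; lra|].
  rewrite <- (pow1 k). apply pow_incr. lra.
Qed.

Lemma pow_one_minus_le_exp x k : 0 <= x <= 1 -> (1 - x) ^ k <= exp (- (INR k * x)).
Proof.
  intros Hx. replace (- (INR k * x)) with (INR k * - x) by ring.
  rewrite <- exp_pow_INR. apply pow_incr.
  pose proof (exp_ineq1_le (- x)). lra.
Qed.

Lemma bernoulli_ineq y k : y <= 1 -> 1 - INR k * y <= (1 - y) ^ k.
Proof.
  intros Hy. induction k as [|k IH]; simpl pow; [simpl; lra|].
  rewrite S_INR. pose proof (pos_INR k). assert (0 <= 1 - y) by lra.
  destruct (Rle_dec 0 y); [nra|].
  assert (1 <= (1 - y) ^ k) by (apply pow_R1_Rle; lra).
  nra.
Qed.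

Lemma pow_one_minus_ge_exp x n : 0 <= x <= 1 ->
  exp (- (INR n * x)) * (1 - INR n * x ^ 2) <= (1 - x) ^ n.
Proof.
  intros Hx.
  assert (Hstep : exp (- x) * (1 - x ^ 2) <= 1 - x).
  { pose proof (exp_ineq1_le x). pose proof (exp_mul_cancel x (- x) ltac:(ring)).
    pose proof (exp_pos (- x)). nra. }
  assert (Hpow : (exp (- x) * (1 - x ^ 2)) ^ n <= (1 - x) ^ n).
  { apply pow_incr. split; [|exact Hstep].
    apply Rmult_le_pos; [left; apply exp_pos | nra]. }
  rewrite Rpow_mult_distr, exp_pow_INR in Hpow.
  pose proof (bernoulli_ineq (x ^ 2) n ltac:(nra)).
  replace (INR n * - x) with (- (INR n * x)) in Hpow by ring.
  pose proof (exp_pos (- (INR n * x))). nra.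
Qed.

Lemma exp_le_affine t : 0 <= t <= 1/2 -> exp t <= 1 + 2 * t.
Proof.
  intros Ht. pose proof (exp_ineq1_le (- t)). pose proof (exp_mul_cancel t (- t) ltac:(ring)).
  pose proof (exp_pos t). nra.
Qed.

Lemma exp_neg_mul_pow_le lam c k : 0 <= lam -> 0 < c ->
  exp (- (c * lam)) * lam ^ k <= (INR k / c) ^ k.
Proof.
  intros Hl Hc. destruct k as [|k].
  - simpl. pose proof (exp_ineq1_le (c * lam)).
    pose proof (exp_mul_cancel (c * lam) (- (c * lam)) ltac:(ring)).
    pose proof (exp_pos (- (c * lam))). assert (0 <= c * lam) by nra. nra.
  - set (K := INR (S k)). assert (HK : 0 < K) by (apply lt_0_INR; lia).
    assert (Hbase : c * lam / K <= exp (c * lam / K)).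
    { pose proof (exp_ineq1_le (c * lam / K)). lra. }
    assert (Hpow : (c * lam / K) ^ S k <= exp (c * lam / K) ^ S k).
    { apply pow_incr. split; [|exact Hbase].
      apply Rmult_le_pos; [nra | left; now apply Rinv_0_lt_compat]. }
    rewrite exp_pow_INR in Hpow. fold K in Hpow.
    replace (K * (c * lam / K)) with (c * lam) in Hpow by (field; lra).
    replace (lam ^ S k) with ((K / c) ^ S k * (c * lam / K) ^ S k)
      by (rewrite <- Rpow_mult_distr; f_equal; field; lra).
    assert (0 <= (K / c) ^ S k)
      by (apply pow_le, Rmult_le_pos; [lra | left; now apply Rinv_0_lt_compat]).
    pose proof (exp_mul_cancel (c * lam) (- (c * lam)) ltac:(ring)). pose proof (exp_pos (- (c * lam))).
    assert (exp (- (c * lam)) * (c * lam / K) ^ S k <= 1) by nra.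
    nra.
Qed.

Lemma pow_sub_pow_le lam h k : 0 <= h <= lam ->
  lam ^ S k - (lam - h) ^ S k <= INR (S k) * h * lam ^ k.
Proof.
  intros Hh. induction k as [|k IH]; [simpl; lra|].
  change (lam ^ S (S k)) with (lam * lam ^ S k).
  change ((lam - h) ^ S (S k)) with ((lam - h) * (lam - h) ^ S k).
  assert (0 <= (lam - h) ^ S k <= lam ^ S k) by (split; [apply pow_le | apply pow_incr]; lra).
  assert (0 <= lam ^ k) by (apply pow_le; lra).
  rewrite (S_INR (S k)). change (lam ^ S k) with (lam * lam ^ k) in *.
  assert (lam * (lam * lam ^ k) - lam * (lam - h) ^ S k <= lam * (INR (S k) * h * lam ^ k))
    by (apply (Rmult_le_compat_l lam) in IH; lra).
  assert (h * (lam - h) ^ S k <= h * (lam * lam ^ k)) by (apply Rmult_le_compat_l; lra).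
  nra.
Qed.

Lemma one_minus_pow_ge x k : 0 <= x <= 1 ->
  INR (S k) * x * (1 - x) ^ k <= 1 - (1 - x) ^ S k.
Proof.
  intros Hx. induction k as [|k IH]; [simpl; lra|].
  pose proof (pow_unit_interval (1 - x) k ltac:(lra)).
  change ((1 - x) ^ S (S k)) with ((1 - x) * (1 - x) ^ S k).
  change ((1 - x) ^ S k) with ((1 - x) * (1 - x) ^ k) in *.
  rewrite (S_INR (S k)). nra.
Qed.

Lemma exp_neg_INR k : exp (- INR k) = exp (-1) ^ k.
Proof. rewrite exp_pow_INR. f_equal. ring. Qed.

Lemma exp_neg_one_bounds : 0 < exp (-1) <= / 2.6.
Proof.
  assert (He : 2.6 <= exp 1).
  { replace 1 with (INR 16 * (1 / 16)) by (simpl; field).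
    rewrite <- exp_pow_INR. apply Rle_trans with ((17 / 16) ^ 16); [lra|].
    apply pow_incr. pose proof (exp_ineq1_le (1 / 16)). lra. }
  pose proof (exp_pos (-1)). pose proof (exp_mul_cancel 1 (-1) ltac:(ring)).
  split; [lra|]. apply Rmult_le_reg_l with 2.6; [lra|]. rewrite Rinv_r by lra. nra.
Qed.

Lemma mul_exp_one_minus_le u : u * exp (1 - u) <= 1.
Proof.
  pose proof (exp_ineq1_le (u - 1)). pose proof (exp_pos (1 - u)).
  pose proof (exp_mul_cancel (u - 1) (1 - u) ltac:(ring)).
  nra.
Qed.

Lemma sq_exp_le_one_minus u : 0 <= u ->
  (u - 1) ^ 2 * exp (1 - u) <= 4 * (1 - u * exp (1 - u)).
Proof.
  intros Hu.
  assert (Hhalf : exp (u - 1) = exp ((u - 1) / 2) ^ 2)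
    by (rewrite exp_pow_INR; f_equal; simpl; field).
  assert ((1 + (u - 1) / 2) ^ 2 <= exp ((u - 1) / 2) ^ 2)
    by (apply pow_incr; split; [lra | apply exp_ineq1_le]).
  pose proof (exp_mul_cancel (u - 1) (1 - u) ltac:(ring)).
  pose proof (exp_pos (1 - u)).
  assert ((u - 1) ^ 2 <= 4 * (exp (u - 1) - u)) by (rewrite Hhalf; nra).
  nra.
Qed.

Lemma pow_mul_one_minus_le v k : 0 <= v <= 1 -> (1 <= k)%nat ->
  v ^ k * (1 - v) <= exp (-1) / INR k.
Proof.
  intros Hv Hk. assert (HK : 0 < INR k) by (apply lt_0_INR; lia).
  set (z := INR k * (1 - v)).
  assert (Hpow : v ^ k <= exp (- z)).
  { unfold z. replace (- (INR k * (1 - v))) with (INR k * (v - 1)) by ring.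
    rewrite <- exp_pow_INR. apply pow_incr. pose proof (exp_ineq1_le (v - 1)). lra. }
  assert (Hz : z * exp (- z) <= exp (-1)).
  { pose proof (exp_ineq1_le (z - 1)). pose proof (exp_pos (- z)).
    assert (exp (z - 1) * exp (- z) = exp (-1)) by (rewrite <- exp_plus; f_equal; ring).
    nra. }
  apply Rmult_le_reg_l with (INR k); [lra|].
  replace (INR k * (exp (-1) / INR k)) with (exp (-1)) by (field; lra).
  assert (v ^ k * (1 - v) <= exp (- z) * (1 - v)) by (apply Rmult_le_compat_r; lra).
  unfold z in *. nra.
Qed.

(* A Stirling-type bound: k^k e^{-k} <= 4.5 e^{-3} k! for k >= 3,
   by induction using (1 + 1/k)^k <= e. *)
Lemma pow_self_exp_le_fact k : (3 <= k)%nat ->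
  INR k ^ k * exp (- INR k) <= 4.5 * exp (-3) * INR (fact k).
Proof.
  induction k as [|k IH]; intros Hk; [lia|].
  destruct (Nat.eq_dec k 2) as [->|Hk2].
  { replace (exp (- INR 3)) with (exp (-3)) by (f_equal; simpl; ring).
    pose proof (exp_pos (-3)). simpl. lra. }
  specialize (IH ltac:(lia)).
  assert (Hkp : 0 < INR k) by (apply lt_0_INR; lia).
  assert (Hgrowth : (INR k + 1) ^ k <= INR k ^ k * exp 1).
  { replace (INR k + 1) with (INR k * (1 + / INR k)) by (field; lra).
    rewrite Rpow_mult_distr. apply Rmult_le_compat_l; [apply pow_le; lra|].
    replace 1 with (INR k * / INR k) at 2 by (field; lra).
    rewrite <- exp_pow_INR. apply pow_incr.
    pose proof (Rinv_0_lt_compat _ Hkp). split; [lra | apply exp_ineq1_le]. }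
  rewrite fact_simpl, mult_INR, S_INR. simpl pow.
  replace (- (INR k + 1)) with (- INR k + - 1) by ring. rewrite exp_plus.
  pose proof (exp_mul_cancel 1 (-1) ltac:(ring)) as Hinv.
  pose proof (exp_pos (- INR k)). pose proof (exp_pos (-1)).
  assert (Hstep : (INR k + 1) ^ k * exp (-1) <= INR k ^ k).
  { apply Rle_trans with (INR k ^ k * exp 1 * exp (-1)); [apply Rmult_le_compat_r; lra|].
    rewrite Rmult_assoc, Hinv. lra. }
  assert (0 <= (INR k + 1) * exp (- INR k)) by nra.
  apply Rle_trans with ((INR k + 1) * (INR k ^ k * exp (- INR k))); [nra|].
  replace (4.5 * exp (-3) * ((INR k + 1) * INR (fact k)))
    with ((INR k + 1) * (4.5 * exp (-3) * INR (fact k))) by ring.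
  apply Rmult_le_compat_l; lra.
Qed.

(* The limiting profile of d! (1 - sigma^2 / mu) in the regime lam = n / m,
   namely e^{-lam} lam^{d-1} ((lam - d)^2 + lam), written with d = d1 + 1. *)
Definition deficit_profile (d1 : nat) (lam : R) : R :=
  exp (- lam) * (INR (S d1) ^ 2 * lam ^ d1
                 - (2 * INR (S d1) - 1) * lam ^ S d1 + lam ^ S (S d1)).

(* Substituting u = lam/d and v = u e^{1-u} in [0, 1] reduces the profile to
   e^{-d} d^d times a polynomial in v. *)
Lemma deficit_profile_reduce d1 lam : (1 <= d1)%nat -> 0 <= lam ->
  let dr := INR (S d1) in
  exists v, 0 <= v <= 1 /\
    deficit_profile d1 lam <= exp (- dr) * dr ^ S d1 * (v ^ d1 * (4 * dr * (1 - v) + v)).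
Proof.
  intros Hd1 Hl dr.
  assert (Hdr : 2 <= dr) by (unfold dr; rewrite S_INR; apply (le_INR 1) in Hd1; simpl in Hd1; lra).
  set (u := lam / dr).
  assert (Hu : 0 <= u) by (apply Rmult_le_pos; [lra | left; apply Rinv_0_lt_compat; lra]).
  set (v := u * exp (1 - u)).
  assert (Hv0 : 0 <= v) by (pose proof (exp_pos (1 - u)); unfold v; nra).
  exists v. split; [split; [exact Hv0 | apply mul_exp_one_minus_le]|].
  assert (Hexp : exp (- lam) = exp (- dr) * exp (1 - u) ^ S d1).
  { rewrite exp_pow_INR, <- exp_plus. f_equal. fold dr. unfold u. field. lra. }
  assert (Hform : deficit_profile d1 lam
     = exp (- dr) * dr ^ S d1 * v ^ d1 * (dr * ((u - 1) ^ 2 * exp (1 - u)) + v)).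
  { unfold deficit_profile. fold dr. rewrite Hexp. unfold v.
    replace lam with (dr * u) by (unfold u; field; lra).
    rewrite !Rpow_mult_distr. simpl pow. ring. }
  rewrite Hform, Rmult_assoc. apply Rmult_le_compat_l.
  - apply Rmult_le_pos; [left; apply exp_pos | apply pow_le; lra].
  - apply Rmult_le_compat_l; [apply pow_le; lra|].
    pose proof (sq_exp_le_one_minus u Hu) as Hsq. fold v in Hsq. nra.
Qed.

Lemma deficit_profile_le d1 lam : (1 <= d1)%nat -> 0 <= lam ->
  deficit_profile d1 lam <= 0.9 * INR (fact (S d1)).
Proof.
  intros Hd1 Hl.
  destruct (deficit_profile_reduce d1 lam Hd1 Hl) as [v [Hv Hred]].
  set (dr := INR (S d1)) in Hred.
  eapply Rle_trans; [exact Hred|]. clear Hred.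
  destruct exp_neg_one_bounds as [He0 He1].
  destruct (Nat.eq_dec d1 1) as [->|Hd2].
  - (* d = 2: maximise v (8 - 7 v) <= 16/7 *)
    unfold dr. rewrite exp_neg_INR. simpl INR.
    assert (v * (8 * (1 - v) + v) <= 16 / 7) by (pose proof (pow2_ge_0 (v - 4 / 7)); nra).
    assert (0 <= v * (8 * (1 - v) + v)) by nra.
    assert (exp (-1) * exp (-1) <= / 2.6 * / 2.6) by nra.
    assert (exp (-1) * exp (-1) * (v * (8 * (1 - v) + v)) <= / 2.6 * / 2.6 * (16 / 7))
      by (apply Rmult_le_compat; nra).
    simpl. nra.
  - (* d >= 3: Stirling and v^{d-1} (1 - v) <= 1/(e (d-1)) *)
    assert (HK : 2 <= INR d1) by (apply (le_INR 2); lia).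
    assert (Hdr : dr = INR d1 + 1) by apply S_INR.
    assert (Hstir : exp (- dr) * dr ^ S d1 <= 4.5 * exp (-3) * INR (fact (S d1))).
    { rewrite Rmult_comm. apply pow_self_exp_le_fact. lia. }
    assert (Hpoly : v ^ d1 * (4 * dr * (1 - v) + v) <= 1 + 6 * exp (-1)).
    { pose proof (pow_mul_one_minus_le v d1 Hv ltac:(lia)).
      assert (v ^ d1 * v <= 1).
      { replace (v ^ d1 * v) with (v ^ S d1) by (simpl; ring).
        apply pow_unit_interval; lra. }
      assert (4 * dr * (v ^ d1 * (1 - v)) <= 6 * exp (-1)).
      { apply Rle_trans with (4 * dr * (exp (-1) / INR d1)); [apply Rmult_le_compat_l; lra|].
        rewrite Hdr. apply Rmult_le_reg_l with (INR d1); [lra|].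
        field_simplify; [|lra]. nra. }
      nra. }
    assert (0 <= v ^ d1 * (4 * dr * (1 - v) + v))
      by (apply Rmult_le_pos; [apply pow_le | nra]; lra).
    assert (Hcube : exp (-3) * (1 + 6 * exp (-1)) <= 0.2).
    { replace (exp (-3)) with (exp (-1) ^ 3) by (rewrite <- (exp_neg_INR 3); f_equal; simpl; ring).
      assert (exp (-1) <= 0.385) by lra.
      assert (exp (-1) * exp (-1) <= 0.385 * 0.385) by nra.
      assert (exp (-1) * exp (-1) * exp (-1) <= 0.385 * 0.385 * 0.385) by nra.
      simpl. nra. }
    pose proof (INR_fact_lt_0 (S d1)). pose proof (exp_pos (-3)).
    assert (0 <= exp (- dr) * dr ^ S d1) by (apply Rmult_le_pos; [left; apply exp_pos | apply pow_le; lra]).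
    apply Rle_trans with (4.5 * exp (-3) * INR (fact (S d1)) * (1 + 6 * exp (-1))).
    + apply Rmult_le_compat; lra.
    + nra.
Qed.

Fixpoint falling (y : R) (k : nat) : R :=
  match k with O => 1 | S k' => falling y k' * (y - INR k') end.

Lemma fact_falling n d : (d <= n)%nat ->
  INR (fact n) = INR (fact (n - d)) * falling (INR n) d.
Proof.
  induction d as [|d IH]; intros Hd; simpl falling.
  - rewrite Nat.sub_0_r. ring.
  - rewrite IH by lia. replace (n - d)%nat with (S (n - S d)) by lia.
    rewrite fact_simpl, mult_INR, S_INR, minus_INR, S_INR by lia. ring.
Qed.

Lemma binomR_falling n d : (d <= n)%nat -> binomR n d = falling (INR n) d / INR (fact d).
Proof.
  intros Hd. unfold binomR. rewrite (proj2 (Nat.leb_le d n) Hd), (fact_falling n d Hd).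
  pose proof (INR_fact_lt_0 d). pose proof (INR_fact_lt_0 (n - d)).
  field. lra.
Qed.

Lemma multi2R_binomR n d : (2 * d <= n)%nat -> multi2R n d = binomR n d * binomR (n - d) d.
Proof.
  intros Hd. unfold multi2R, binomR.
  rewrite (proj2 (Nat.leb_le _ _) Hd), (proj2 (Nat.leb_le d n)), (proj2 (Nat.leb_le d (n - d))) by lia.
  replace (n - d - d)%nat with (n - 2 * d)%nat by lia.
  pose proof (INR_fact_lt_0 d). pose proof (INR_fact_lt_0 (n - d)).
  pose proof (INR_fact_lt_0 (n - 2 * d)).
  field. repeat split; lra.
Qed.

Lemma multi2R_zero n d : (n < 2 * d)%nat -> multi2R n d = 0.
Proof. intros Hd. unfold multi2R. now rewrite (proj2 (Nat.leb_gt _ _) Hd). Qed.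

Lemma falling_bounds y k : INR k <= y ->
  0 <= falling y k <= y ^ k /\ (y - INR k) ^ k <= falling y k.
Proof.
  induction k as [|k IH]; intros Hk; [simpl; lra|].
  rewrite S_INR in Hk. destruct (IH ltac:(lra)) as [[H0 Hup] Hlow].
  pose proof (pos_INR k). simpl falling. rewrite S_INR. simpl pow.
  assert (0 <= (y - (INR k + 1)) ^ k) by (apply pow_le; lra).
  assert ((y - (INR k + 1)) ^ k <= (y - INR k) ^ k) by (apply pow_incr; lra).
  repeat split; nra.
Qed.

Lemma falling_shift_le y s k : 0 <= s -> INR (S k) + s <= y ->
  falling y (S k) - falling (y - s) (S k) <= INR (S k) * s * y ^ k.
Proof.
  induction k as [|k IH]; intros Hs Hy; [simpl; lra|].
  assert (Hy' : INR (S k) + s <= y) by (rewrite (S_INR (S k)) in Hy; lra).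
  specialize (IH Hs Hy').
  destruct (falling_bounds (y - s) (S k) ltac:(lra)) as [[Hpos Hup] _].
  pose proof (pos_INR (S k)).
  assert ((y - s) ^ S k <= y ^ S k) by (apply pow_incr; lra).
  assert (0 <= y ^ k) by (apply pow_le; lra).
  change (falling y (S (S k))) with (falling y (S k) * (y - INR (S k))).
  change (falling (y - s) (S (S k))) with (falling (y - s) (S k) * (y - s - INR (S k))).
  rewrite (S_INR (S k)).
  assert ((falling y (S k) - falling (y - s) (S k)) * (y - INR (S k))
          <= INR (S k) * s * y ^ k * y).
  { apply Rle_trans with (INR (S k) * s * y ^ k * (y - INR (S k)));
      [apply Rmult_le_compat_r; lra|].
    apply Rmult_le_compat_l; [|lra]. apply Rmult_le_pos; [apply Rmult_le_pos|]; lra. }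
  assert (falling (y - s) (S k) * s <= y ^ S k * s) by (apply Rmult_le_compat_r; lra).
  change (y ^ S k) with (y * y ^ k) in *. nra.
Qed.

Lemma falling_pair_bounds d1 y : 2 * INR (S d1) <= y ->
  falling y (S d1) - falling (y - INR (S d1)) (S d1) <= INR (S d1) * INR (S d1) * y ^ d1 /\
  (y - 2 * INR (S d1)) ^ S d1 <= falling (y - INR (S d1)) (S d1) <= y ^ S d1.
Proof.
  intros Hy. pose proof (pos_INR (S d1)).
  destruct (falling_bounds (y - INR (S d1)) (S d1) ltac:(lra)) as [[_ Hup] Hlow].
  split; [|split].
  - apply falling_shift_le; lra.
  - replace (y - 2 * INR (S d1)) with (y - INR (S d1) - INR (S d1)) by ring. exact Hlow.
  - eapply Rle_trans; [exact Hup | apply pow_incr; lra].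
Qed.

Lemma binomR_bounds n d : (d <= n)%nat -> 0 <= binomR n d <= INR n ^ d.
Proof.
  intros Hd. rewrite binomR_falling by exact Hd.
  destruct (falling_bounds (INR n) d (le_INR _ _ Hd)) as [[H0 Hup] _].
  assert (1 <= INR (fact d)) by (apply (le_INR 1), lt_O_fact).
  split; [apply Rmult_le_pos; [lra | left; apply Rinv_0_lt_compat; lra]|].
  apply Rmult_le_reg_l with (INR (fact d)); [lra|]. field_simplify; [|lra]. nra.
Qed.

(* The second factorial moment E[Y (Y - 1)]: sigma^2 = mu + E[Y (Y - 1)] - mu^2. *)
Definition pair_moment (d n m : nat) : R :=
  INR m * (INR m - 1) * multi2R n d * (/ INR m) ^ (2 * d) * (1 - 2 / INR m) ^ (n - 2 * d).

Lemma sigma2_pair_moment d n m : sigma2 d n m = mu d n m + pair_moment d n m - mu d n m ^ 2.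
Proof. reflexivity. Qed.

Lemma INR_ge_2 m : (2 <= m)%nat -> 2 <= INR m.
Proof. intros Hm. apply (le_INR 2) in Hm. simpl in Hm. lra. Qed.

Lemma inv_INR_half m : (2 <= m)%nat -> 0 < / INR m <= 1 / 2 /\ INR m * / INR m = 1.
Proof.
  intros Hm. pose proof (INR_ge_2 m Hm).
  split; [split|]; [apply Rinv_0_lt_compat; lra | | field; lra].
  apply Rmult_le_reg_l with (INR m); [lra|]. rewrite Rinv_r; lra.
Qed.

Definition poisson_scale (d n m : nat) : R :=
  INR m * (INR n / INR m) ^ d * exp (- (INR n / INR m)).

Lemma poisson_scale_nonneg d n m : (2 <= m)%nat -> 0 <= poisson_scale d n m.
Proof.
  intros Hm. destruct (inv_INR_half m Hm) as [[Hx _] _]. pose proof (pos_INR n).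
  unfold poisson_scale. apply Rmult_le_pos; [|left; apply exp_pos].
  apply Rmult_le_pos; [apply pos_INR | apply pow_le, Rmult_le_pos; lra].
Qed.

Lemma mu_nonneg d n m : (d <= n)%nat -> (2 <= m)%nat -> 0 <= mu d n m.
Proof.
  intros Hn Hm. destruct (inv_INR_half m Hm) as [[Hx Hx2] _].
  pose proof (binomR_bounds n d Hn). unfold mu.
  repeat apply Rmult_le_pos; try (apply pow_le; lra); try apply pos_INR; lra.
Qed.

Lemma mu_le_pow d n m : (1 <= d)%nat -> (d <= n)%nat -> (2 <= m)%nat -> mu d n m <= INR n ^ d.
Proof.
  intros Hd Hn Hm. destruct (inv_INR_half m Hm) as [[Hx Hx2] Hmx].
  set (x := / INR m) in *. unfold mu. fold x.
  destruct (binomR_bounds n d Hn) as [B0 B1].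
  pose proof (pow_unit_interval (1 - x) (n - d) ltac:(lra)).
  assert (Hmxd : INR m * x ^ d <= 1).
  { replace d with (S (d - 1)) at 1 by lia. simpl pow.
    rewrite <- Rmult_assoc, Hmx, Rmult_1_l. apply pow_unit_interval; lra. }
  assert (0 <= INR m * x ^ d) by (apply Rmult_le_pos; [apply pos_INR | apply pow_le; lra]).
  replace (INR m * binomR n d * x ^ d * (1 - x) ^ (n - d))
    with (binomR n d * (INR m * x ^ d) * (1 - x) ^ (n - d)) by ring.
  assert (binomR n d * (INR m * x ^ d) <= INR n ^ d) by nra.
  assert (0 <= binomR n d * (INR m * x ^ d)) by nra.
  nra.
Qed.

Lemma pair_moment_le_pow d n m : (1 <= d)%nat -> (2 <= m)%nat ->
  pair_moment d n m <= INR n ^ (2 * d).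
Proof.
  intros Hd Hm. destruct (inv_INR_half m Hm) as [[Hx Hx2] Hmx].
  pose proof (pos_INR n). pose proof (pow_le (INR n) (2 * d) ltac:(lra)).
  unfold pair_moment. destruct (le_lt_dec (2 * d) n) as [H2d|H2d];
    [|rewrite multi2R_zero by exact H2d; lra].
  rewrite multi2R_binomR by exact H2d. set (x := / INR m) in *.
  replace (2 / INR m) with (2 * x) by reflexivity.
  destruct (binomR_bounds n d ltac:(lia)) as [B0 B1].
  destruct (binomR_bounds (n - d) d ltac:(lia)) as [B2 B3].
  assert (INR (n - d) ^ d <= INR n ^ d) by (apply pow_incr; split; [apply pos_INR | apply le_INR; lia]).
  assert (Hbin : binomR n d * binomR (n - d) d <= INR n ^ (2 * d)).
  { replace (2 * d)%nat with (d + d)%nat by lia. rewrite pow_add.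
    apply Rmult_le_compat; lra. }
  assert (Hscale : 0 <= INR m * (INR m - 1) * x ^ (2 * d) <= 1).
  { assert (Hxx : x ^ (2 * d) = x ^ 2 * x ^ (2 * d - 2)) by (rewrite <- pow_add; f_equal; lia).
    pose proof (pow_unit_interval x (2 * d - 2) ltac:(lra)).
    assert (Hmm : INR m * (INR m - 1) * x ^ 2 = 1 - x).
    { replace (INR m * (INR m - 1) * x ^ 2)
        with ((INR m * x) * (INR m * x) - (INR m * x) * x) by ring.
      rewrite Hmx. ring. }
    rewrite Hxx, <- Rmult_assoc, Hmm. nra. }
  pose proof (pow_unit_interval (1 - 2 * x) (n - 2 * d) ltac:(lra)).
  replace (INR m * (INR m - 1) * (binomR n d * binomR (n - d) d) * x ^ (2 * d) * (1 - 2 * x) ^ (n - 2 * d))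
    with (binomR n d * binomR (n - d) d * (INR m * (INR m - 1) * x ^ (2 * d)) * (1 - 2 * x) ^ (n - 2 * d))
    by ring.
  assert (0 <= binomR n d * binomR (n - d) d) by nra.
  assert (binomR n d * binomR (n - d) d * (INR m * (INR m - 1) * x ^ (2 * d)) <= INR n ^ (2 * d)) by nra.
  assert (0 <= binomR n d * binomR (n - d) d * (INR m * (INR m - 1) * x ^ (2 * d))) by nra.
  nra.
Qed.

Lemma sigma2_le_pow d n m : (1 <= d)%nat -> (d <= n)%nat -> (2 <= m)%nat ->
  sigma2 d n m <= INR n ^ d + INR n ^ (2 * d).
Proof.
  intros Hd Hn Hm. rewrite sigma2_pair_moment.
  pose proof (mu_le_pow d n m Hd Hn Hm). pose proof (pair_moment_le_pow d n m Hd Hm).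
  pose proof (pow2_ge_0 (mu d n m)). lra.
Qed.

Lemma mu_le_poisson d n m : (d <= n)%nat -> (2 <= m)%nat ->
  mu d n m <= exp (INR d) * poisson_scale d n m.
Proof.
  intros Hn Hm. destruct (inv_INR_half m Hm) as [[Hx Hx2] _].
  set (x := / INR m) in *. unfold mu, poisson_scale. fold x.
  replace (INR n / INR m) with (INR n * x) by reflexivity.
  destruct (binomR_bounds n d Hn) as [B0 B1].
  pose proof (pos_INR n). pose proof (pos_INR d).
  assert (Hb : (1 - x) ^ (n - d) <= exp (- (INR n * x)) * exp (INR d)).
  { eapply Rle_trans; [apply pow_one_minus_le_exp; lra|].
    rewrite <- exp_plus. apply exp_le_mono. rewrite minus_INR by exact Hn. nra. }
  assert (0 <= (1 - x) ^ (n - d)) by (apply pow_le; lra).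
  assert (0 <= x ^ d) by (apply pow_le; lra).
  assert (Hpow : INR m * binomR n d * x ^ d <= INR m * (INR n * x) ^ d).
  { rewrite Rpow_mult_distr, Rmult_assoc. apply Rmult_le_compat_l; [apply pos_INR|].
    apply Rmult_le_compat_r; lra. }
  assert (0 <= INR m * binomR n d * x ^ d)
    by (apply Rmult_le_pos; [apply Rmult_le_pos; [apply pos_INR|] |]; lra).
  apply Rle_trans with (INR m * (INR n * x) ^ d * (exp (- (INR n * x)) * exp (INR d)));
    [apply Rmult_le_compat; lra | right; ring].
Qed.

Lemma pair_moment_le_poisson d n m : (2 * d <= n)%nat -> (2 <= m)%nat ->
  pair_moment d n m <= exp (2 * INR d) * poisson_scale d n m ^ 2.
Proof.
  intros Hn Hm. destruct (inv_INR_half m Hm) as [[Hx Hx2] _].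
  set (x := / INR m) in *. unfold pair_moment, poisson_scale. fold x.
  replace (INR n / INR m) with (INR n * x) by reflexivity.
  replace (2 / INR m) with (2 * x) by reflexivity.
  rewrite multi2R_binomR by exact Hn.
  pose proof (pos_INR n). pose proof (pos_INR d).
  assert (HyD : 2 * INR d <= INR n) by (apply le_INR in Hn; rewrite mult_INR in Hn; simpl in Hn; lra).
  destruct (binomR_bounds n d ltac:(lia)) as [B0 B1].
  destruct (binomR_bounds (n - d) d ltac:(lia)) as [B2 B3].
  rewrite minus_INR in B3 by lia.
  assert ((INR n - INR d) ^ d <= INR n ^ d) by (apply pow_incr; lra).
  assert (Hb : (1 - 2 * x) ^ (n - 2 * d)
               <= exp (- (INR n * x)) * exp (- (INR n * x)) * exp (2 * INR d)).
  { eapply Rle_trans; [apply pow_one_minus_le_exp; lra|].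
    rewrite <- !exp_plus. apply exp_le_mono.
    rewrite minus_INR, mult_INR by exact Hn. simpl INR. nra. }
  assert (0 <= (1 - 2 * x) ^ (n - 2 * d)) by (apply pow_le; lra).
  assert (0 <= INR n ^ d) by (apply pow_le; lra).
  assert (binomR n d * binomR (n - d) d <= INR n ^ d * INR n ^ d) by (apply Rmult_le_compat; lra).
  assert (0 <= binomR n d * binomR (n - d) d) by (apply Rmult_le_pos; lra).
  assert (0 <= x ^ (2 * d)) by (apply pow_le; lra).
  assert (Hx2d : x ^ (2 * d) = x ^ d * x ^ d) by (rewrite <- pow_add; f_equal; lia).
  pose proof (INR_ge_2 m Hm).
  assert (0 <= INR m * (INR m - 1)) by nra.
  apply Rle_trans with (INR m * INR m * (INR n ^ d * INR n ^ d) * x ^ (2 * d)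
                        * (exp (- (INR n * x)) * exp (- (INR n * x)) * exp (2 * INR d))).
  - apply Rmult_le_compat; try lra.
    + repeat apply Rmult_le_pos; lra.
    + apply Rmult_le_compat; try lra; [apply Rmult_le_pos; lra|].
      apply Rmult_le_compat; nra.
  - right. rewrite Hx2d. simpl pow. rewrite !Rpow_mult_distr. ring.
Qed.

Definition poisson_envelope (d : nat) (q : R) : R := exp (INR d) * q + exp (2 * INR d) * q ^ 2.

Lemma poisson_envelope_nonneg d q : 0 <= q -> 0 <= poisson_envelope d q.
Proof.
  intros Hq. pose proof (exp_pos (INR d)). pose proof (exp_pos (2 * INR d)).
  unfold poisson_envelope. pose proof (pow2_ge_0 q). nra.
Qed.

Lemma sigma2_le_poisson d n m : (2 * d <= n)%nat -> (2 <= m)%nat ->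
  sigma2 d n m <= poisson_envelope d (poisson_scale d n m).
Proof.
  intros Hn Hm. rewrite sigma2_pair_moment. unfold poisson_envelope.
  pose proof (mu_le_poisson d n m ltac:(lia) Hm). pose proof (pair_moment_le_poisson d n m Hn Hm).
  pose proof (pow2_ge_0 (mu d n m)). lra.
Qed.

(* The constant K_d = 20 d^3 ((d-1)^{d-1} + (d+1)^{d+1}) absorbing the
   first-order corrections to the Poisson profile. *)
Definition deficit_const (d1 : nat) : R :=
  20 * INR (S d1) ^ 3 * (INR d1 ^ d1 + (INR (S d1) + 1) ^ S (S d1)).

Lemma deficit_const_nonneg d1 : 0 <= deficit_const d1.
Proof.
  pose proof (pos_INR (S d1)). unfold deficit_const.
  apply Rmult_le_pos; [apply Rmult_le_pos; [lra | apply pow_le; lra]|].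
  apply Rplus_le_le_0_compat; apply pow_le; [apply pos_INR | lra].
Qed.

(* The corrections of order x (from e^{x(3d+2)} - 1 and from the shift by 2dx)
   cost at most x K_d, because e^{-lam} lam^k is bounded by k^k. *)
Lemma profile_error_le d1 lam x beta : (1 <= d1)%nat -> 0 <= lam -> 0 < x ->
  0 <= beta - 1 <= 2 * x * (3 * INR (S d1) + 2) ->
  exp (- lam) * ((beta - 1) * (INR (S d1) * INR (S d1) * lam ^ d1 + lam ^ S (S d1))
                 + (2 * INR (S d1) - 1)
                   * (INR (S d1) * (2 * INR (S d1) * x) * lam ^ d1 + x * lam ^ S (S d1)))
  <= x * deficit_const d1.
Proof.
  intros Hd1 Hl Hx Hbeta. unfold deficit_const.
  set (dr := INR (S d1)) in *.
  assert (Hdr : 2 <= dr) by (unfold dr; rewrite S_INR; apply (le_INR 1) in Hd1; simpl in Hd1; lra).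
  assert (HL1 : exp (- lam) * lam ^ d1 <= INR d1 ^ d1).
  { pose proof (exp_neg_mul_pow_le lam 1 d1 Hl ltac:(lra)) as H.
    now rewrite Rmult_1_l, Rdiv_1_r in H. }
  assert (HL2 : exp (- lam) * lam ^ S (S d1) <= (dr + 1) ^ S (S d1)).
  { pose proof (exp_neg_mul_pow_le lam 1 (S (S d1)) Hl ltac:(lra)) as H.
    rewrite Rmult_1_l, Rdiv_1_r, S_INR in H. exact H. }
  pose proof (exp_pos (- lam)).
  assert (0 <= lam ^ d1) by (apply pow_le; lra).
  assert (0 <= lam ^ S (S d1)) by (apply pow_le; lra).
  set (L1 := exp (- lam) * lam ^ d1) in *. set (L2 := exp (- lam) * lam ^ S (S d1)) in *.
  set (A1 := INR d1 ^ d1) in *. set (A2 := (dr + 1) ^ S (S d1)) in *.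
  assert (0 <= L1) by (unfold L1; apply Rmult_le_pos; lra).
  assert (0 <= L2) by (unfold L2; apply Rmult_le_pos; lra).
  replace (exp (- lam) * ((beta - 1) * (dr * dr * lam ^ d1 + lam ^ S (S d1))
           + (2 * dr - 1) * (dr * (2 * dr * x) * lam ^ d1 + x * lam ^ S (S d1))))
    with (((beta - 1) * (dr * dr) + (2 * dr - 1) * dr * (2 * dr * x)) * L1
          + ((beta - 1) + (2 * dr - 1) * x) * L2) by (unfold L1, L2; ring).
  assert (Hc1 : 0 <= (beta - 1) * (dr * dr) + (2 * dr - 1) * dr * (2 * dr * x)
                <= x * (20 * dr ^ 3)).
  { assert (0 <= (beta - 1) * (dr * dr) <= 2 * x * (3 * dr + 2) * (dr * dr))
      by (split; [apply Rmult_le_pos | apply Rmult_le_compat_r]; nra).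
    assert (0 <= x * (dr * dr) * (10 * dr - 2)) by (apply Rmult_le_pos; [apply Rmult_le_pos|]; nra).
    assert (0 <= (2 * dr - 1) * dr * (2 * dr * x)) by (repeat apply Rmult_le_pos; lra).
    simpl pow. split; nra. }
  assert (Hc2 : 0 <= (beta - 1) + (2 * dr - 1) * x <= x * (20 * dr ^ 3)).
  { assert (8 * dr + 3 <= 20 * dr ^ 3) by (simpl pow; nra).
    assert (x * (8 * dr + 3) <= x * (20 * dr ^ 3)) by (apply Rmult_le_compat_l; lra).
    split; nra. }
  assert (((beta - 1) * (dr * dr) + (2 * dr - 1) * dr * (2 * dr * x)) * L1 <= x * (20 * dr ^ 3) * A1)
    by (apply Rmult_le_compat; lra).
  assert (((beta - 1) + (2 * dr - 1) * x) * L2 <= x * (20 * dr ^ 3) * A2)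
    by (apply Rmult_le_compat; lra).
  lra.
Qed.

Section DeficitRatio.

(* The lower bound sigma^2 >= mu/20, as a statement about reals.  Notation:
   d = d1 + 1 >= 2, x = 1/m, b = 1 - x, n = E + 3d + 2 balls, lam = x n,
   P = b^E, D = d!.  F1 and F2 stand for the falling factorials (n)_d and
   (n - d)_d, through the bounds of [falling_pair_bounds].  Then
   mu = x^{d-1} (F1/D) b^{n-d}, and the deficit ratio
   R = 1 - sigma^2/mu = mu - E[Y (Y - 1)]/mu is the left-hand side of
   [deficit_ratio_le_W].  Three reductions bound R by (G(lam) + x K_d)/D. *)
Variables (d1 E : nat) (x F1 F2 : R).
Let d := S d1.
Let dr := INR d.
Let y := INR E + 3 * dr + 2.
Let b := 1 - x.
Let D := INR (fact d).
Let P := b ^ E.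
Let B1 := b ^ (2 * d1).
Let N := (E + d1 + 3)%nat.
Let lam := x * y.

Hypothesis Hd1 : (1 <= d1)%nat.
Hypothesis Hx : 0 < x.
Hypothesis Hx_small : x * (3 * dr + 2) <= 1 / 2.
Hypothesis HF12 : F1 - F2 <= dr * dr * y ^ d1.
Hypothesis HF2_low : (y - 2 * dr) ^ d <= F2.
Hypothesis HF2_up : F2 <= y ^ d.

Lemma dr_ge_2 : 2 <= dr.
Proof. unfold dr, d. rewrite S_INR. apply (le_INR 1) in Hd1. simpl in Hd1. lra. Qed.

Lemma x_le : x <= 1 / 16.
Proof. pose proof dr_ge_2. assert (8 * x <= x * (3 * dr + 2)) by nra. lra. Qed.

Lemma b_bounds : 15 / 16 <= b < 1.
Proof. pose proof x_le. unfold b. lra. Qed.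

Lemma y_ge : 3 * dr + 2 <= y.
Proof. pose proof (pos_INR E). unfold y. lra. Qed.

Lemma lam_nonneg : 0 <= lam.
Proof. pose proof y_ge. pose proof dr_ge_2. unfold lam. nra. Qed.

Lemma F2_nonneg : 0 <= F2.
Proof. pose proof y_ge. pose proof dr_ge_2. pose proof (pow_le (y - 2 * dr) d ltac:(lra)). lra. Qed.

(* With N = n - 2d and P B1 b^4 = b^{n-d}: (1 - 2x)^N / b^{n-d} >= b^{E+2} - N x^2 b^E,
   by Bernoulli applied to (1 - 2x)^N = b^{2N} (1 - x^2/b^2)^N. *)
Lemma pairs_factor_ge : P * b ^ 2 - INR N * x ^ 2 * P <= (1 - 2 * x) ^ N / (P * (B1 * b ^ 4)).
Proof.
  pose proof b_bounds.
  assert (HP : 0 < P) by (apply pow_lt; lra). assert (HB1 : 0 < B1) by (apply pow_lt; lra).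
  assert (Hden : 0 < P * (B1 * b ^ 4))
    by (repeat apply Rmult_lt_0_compat; try apply pow_lt; lra).
  assert (Hsq : (b ^ 2) ^ N = P * (B1 * b ^ 4) * (P * b ^ 2)).
  { rewrite <- pow_mult. replace (2 * N)%nat with (E + 2 * d1 + 4 + (E + 2))%nat by (unfold N; lia).
    rewrite !pow_add. unfold P, B1. ring. }
  assert (Hsplit : 1 - 2 * x = b ^ 2 * (1 - x ^ 2 / b ^ 2)) by (unfold b in *; field; lra).
  assert (Hsmall : x ^ 2 / b ^ 2 <= 1)
    by (apply Rmult_le_reg_l with (b ^ 2); [nra|]; field_simplify; unfold b in *; nra).
  pose proof (bernoulli_ineq (x ^ 2 / b ^ 2) N Hsmall).
  apply Rmult_le_reg_l with (P * (B1 * b ^ 4)); [exact Hden|].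
  replace (P * (B1 * b ^ 4) * ((1 - 2 * x) ^ N / (P * (B1 * b ^ 4)))) with ((1 - 2 * x) ^ N)
    by (field; lra).
  rewrite Hsplit, Rpow_mult_distr, Hsq.
  replace (P * (B1 * b ^ 4) * (P * b ^ 2 - INR N * x ^ 2 * P))
    with (P * (B1 * b ^ 4) * (P * b ^ 2) * (1 - INR N * (x ^ 2 / b ^ 2))) by (field; lra).
  apply Rmult_le_compat_l; [|lra].
  left. repeat apply Rmult_lt_0_compat; try apply pow_lt; lra.
Qed.

Lemma deficit_ratio_le_W :
  / x * (F1 / D) * x ^ d * (P * (B1 * b ^ 4))
    - (/ x - 1) * (F2 / D) * x ^ d * (1 - 2 * x) ^ N / (P * (B1 * b ^ 4))
  <= x ^ d1 * P / D * (F1 * B1 * b ^ 4 - F2 * b ^ 3 + F2 * INR N * x ^ 2 * b).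
Proof.
  pose proof x_le. pose proof b_bounds. pose proof F2_nonneg. pose proof pairs_factor_ge.
  assert (HD : 0 < D) by apply INR_fact_lt_0.
  assert (Hcoef : 0 <= (/ x - 1) * (F2 / D) * x ^ d).
  { assert (1 <= / x) by (apply Rmult_le_reg_l with x; [lra|]; rewrite Rinv_r; lra).
    apply Rmult_le_pos; [apply Rmult_le_pos | apply pow_le; lra]; [lra|].
    apply Rmult_le_pos; [lra | left; apply Rinv_0_lt_compat; lra]. }
  replace ((/ x - 1) * (F2 / D) * x ^ d * (1 - 2 * x) ^ N / (P * (B1 * b ^ 4)))
    with ((/ x - 1) * (F2 / D) * x ^ d * ((1 - 2 * x) ^ N / (P * (B1 * b ^ 4))))
    by (unfold Rdiv; ring).
  apply Rle_trans with (/ x * (F1 / D) * x ^ d * (P * (B1 * b ^ 4))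
                        - (/ x - 1) * (F2 / D) * x ^ d * (P * b ^ 2 - INR N * x ^ 2 * P)).
  - apply Rplus_le_compat_l, Ropp_le_contravar, Rmult_le_compat_l; assumption.
  - right. unfold d, b. simpl pow. field. lra.
Qed.

(* Second reduction: bound the three terms by powers of lam, using
   1 - b^{2d-1} >= (2d - 1) x b^{2d-2} for the middle one. *)
Lemma W_bracket_le :
  x ^ d1 * P / D * (F1 * B1 * b ^ 4 - F2 * b ^ 3 + F2 * INR N * x ^ 2 * b)
  <= / D * (dr * dr * lam ^ d1 * P - (2 * dr - 1) * ((lam - 2 * dr * x) ^ d * (P * B1 * b ^ 3))
           + lam ^ S d * P).
Proof.
  pose proof dr_ge_2. pose proof x_le. pose proof b_bounds. pose proof y_ge. pose proof F2_nonneg.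
  assert (HD : 0 < D) by apply INR_fact_lt_0.
  assert (HP : 0 < P <= 1) by (split; [apply pow_lt | apply pow_unit_interval]; lra).
  assert (HB1 : 0 < B1 <= 1) by (split; [apply pow_lt | apply pow_unit_interval]; lra).
  assert (HN : INR N = y - 2 * dr)
    by (unfold N, y, dr, d; rewrite !plus_INR, !S_INR; simpl; ring).
  assert (Hgap : (2 * dr - 1) * x * B1 <= 1 - b * B1).
  { pose proof (one_minus_pow_ge x (2 * d1) ltac:(lra)) as Hk. fold b B1 in Hk.
    replace (INR (S (2 * d1))) with (2 * dr - 1) in Hk
      by (unfold dr, d; rewrite !S_INR, mult_INR; simpl; ring).
    change (b ^ S (2 * d1)) with (b * B1) in Hk. lra. }
  set (W := x ^ d1 * P).
  assert (HW : 0 <= W) by (apply Rmult_le_pos; [apply pow_le|]; lra).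
  assert (Hb4 : 0 <= B1 * b ^ 4 <= 1)
    by (pose proof (pow_unit_interval b 4 ltac:(lra)); split; nra).
  assert (Hyd1 : 0 <= y ^ d1) by (apply pow_le; lra).
  assert (T1 : W * ((F1 - F2) * (B1 * b ^ 4)) <= dr * dr * lam ^ d1 * P).
  { apply Rle_trans with (W * (dr * dr * y ^ d1)).
    - apply Rmult_le_compat_l; [exact HW|].
      apply Rle_trans with (dr * dr * y ^ d1 * (B1 * b ^ 4)); [apply Rmult_le_compat_r; lra|].
      assert (0 <= dr * dr * y ^ d1) by (apply Rmult_le_pos; nra). nra.
    - right. unfold W, lam. rewrite Rpow_mult_distr. ring. }
  assert (T2 : (lam - 2 * dr * x) ^ d * (P * B1 * b ^ 3) <= W * (x * F2 * B1 * b ^ 3)).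
  { replace (lam - 2 * dr * x) with (x * (y - 2 * dr)) by (unfold lam; ring).
    replace (W * (x * F2 * B1 * b ^ 3)) with (x ^ d * F2 * (P * B1 * b ^ 3))
      by (unfold W, d; simpl pow; ring).
    rewrite Rpow_mult_distr. apply Rmult_le_compat_r.
    - apply Rmult_le_pos; [nra | apply pow_le; lra].
    - apply Rmult_le_compat_l; [apply pow_le|]; lra. }
  assert (T3 : W * (F2 * INR N * x ^ 2 * b) <= lam ^ S d * P).
  { assert (F2 * INR N * b <= y ^ d * y).
    { rewrite HN. assert (0 <= y ^ d) by (apply pow_le; lra).
      assert (F2 * (y - 2 * dr) <= y ^ d * y) by (apply Rmult_le_compat; lra).
      assert (0 <= F2 * (y - 2 * dr)) by (apply Rmult_le_pos; lra). nra. }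
    apply Rle_trans with (W * (y ^ d * y * x ^ 2)).
    - replace (F2 * INR N * x ^ 2 * b) with (F2 * INR N * b * x ^ 2) by ring.
      apply Rmult_le_compat_l; [lra|]. apply Rmult_le_compat_r; [nra | lra].
    - right. unfold W, lam. rewrite Rpow_mult_distr. unfold d. simpl pow. ring. }
  assert (Hmid : F1 * B1 * b ^ 4 - F2 * b ^ 3
                 <= (F1 - F2) * (B1 * b ^ 4) - (2 * dr - 1) * (x * F2 * B1 * b ^ 3)).
  { assert (0 <= F2 * b ^ 3) by (apply Rmult_le_pos; [lra | apply pow_le; lra]).
    assert (F2 * b ^ 3 * (b * B1) <= F2 * b ^ 3 * (1 - (2 * dr - 1) * x * B1))
      by (apply Rmult_le_compat_l; lra).
    simpl pow in *. nra. }
  assert (HWmid : W * (F1 * B1 * b ^ 4 - F2 * b ^ 3)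
                  <= W * ((F1 - F2) * (B1 * b ^ 4)) - (2 * dr - 1) * (W * (x * F2 * B1 * b ^ 3)))
    by (pose proof (Rmult_le_compat_l W _ _ HW Hmid); lra).
  assert ((2 * dr - 1) * ((lam - 2 * dr * x) ^ d * (P * B1 * b ^ 3))
          <= (2 * dr - 1) * (W * (x * F2 * B1 * b ^ 3))) by (apply Rmult_le_compat_l; lra).
  unfold Rdiv. rewrite (Rmult_comm W), Rmult_assoc.
  apply Rmult_le_compat_l; [left; apply Rinv_0_lt_compat; lra|]. lra.
Qed.

Lemma P_le_exp : P <= exp (- lam) * exp (x * (3 * dr + 2)).
Proof.
  pose proof x_le. unfold P, b. rewrite <- exp_plus.
  eapply Rle_trans; [apply pow_one_minus_le_exp; lra|].
  apply exp_le_mono. unfold lam, y. lra.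
Qed.

(* b^{E + 2d + 1} >= b^n >= e^{-lam} (1 - lam x). *)
Lemma Z_ge_exp : exp (- lam) * (1 - lam * x) <= P * B1 * b ^ 3.
Proof.
  pose proof x_le. pose proof b_bounds.
  set (n := (E + 3 * d1 + 5)%nat).
  assert (Hn : INR n = y) by (unfold n, y, dr, d; rewrite !plus_INR, mult_INR, !S_INR; simpl; ring).
  pose proof (pow_one_minus_ge_exp x n ltac:(lra)) as Hlow.
  rewrite Hn in Hlow. fold b in Hlow.
  replace (- (y * x)) with (- lam) in Hlow by (unfold lam; ring).
  replace (1 - y * x ^ 2) with (1 - lam * x) in Hlow by (unfold lam; ring).
  eapply Rle_trans; [exact Hlow|].
  replace n with (E + 2 * d1 + 3 + (d1 + 2))%nat by (unfold n; lia).
  rewrite pow_add.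
  replace (b ^ (E + 2 * d1 + 3)) with (P * B1 * b ^ 3) by (unfold P, B1; rewrite !pow_add; ring).
  pose proof (pow_unit_interval b (d1 + 2) ltac:(lra)).
  assert (0 <= P * B1 * b ^ 3)
    by (apply Rmult_le_pos; [apply Rmult_le_pos|]; apply pow_le; lra).
  nra.
Qed.

Lemma bracket_le_profile :
  dr * dr * lam ^ d1 * P - (2 * dr - 1) * ((lam - 2 * dr * x) ^ d * (P * B1 * b ^ 3))
  + lam ^ S d * P <= deficit_profile d1 lam + x * deficit_const d1.
Proof.
  pose proof dr_ge_2. pose proof x_le. pose proof y_ge. pose proof P_le_exp. pose proof Z_ge_exp.
  assert (Hlam : 2 * dr * x <= lam) by (unfold lam; nra).
  set (ex := exp (- lam)) in *. set (beta := exp (x * (3 * dr + 2))) in *.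
  set (h := 2 * dr * x) in *. set (Z := P * B1 * b ^ 3) in *.
  pose proof (exp_pos (- lam)) as Hex. fold ex in Hex.
  assert (Hbeta : 0 <= beta - 1 <= 2 * x * (3 * dr + 2)).
  { pose proof (exp_ineq1_le (x * (3 * dr + 2))) as Hb1.
    pose proof (exp_le_affine (x * (3 * dr + 2)) ltac:(nra)) as Hb2.
    fold beta in Hb1, Hb2. lra. }
  assert (Hh : 0 <= h) by (unfold h; nra).
  assert (Hpd : lam ^ d - (lam - h) ^ d <= dr * h * lam ^ d1) by (apply pow_sub_pow_le; lra).
  assert (Hlh : 0 <= (lam - h) ^ d <= lam ^ d) by (split; [apply pow_le | apply pow_incr]; lra).
  assert (0 <= lam ^ d1) by (apply pow_le; lra).
  assert (0 <= lam ^ S d) by (apply pow_le; lra).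
  assert (HlSd : lam ^ S d = lam * lam ^ d) by reflexivity.
  assert (HZ : ex * (lam ^ d - dr * h * lam ^ d1 - x * lam ^ S d) <= (lam - h) ^ d * Z).
  { apply Rle_trans with ((lam - h) ^ d * (ex * (1 - lam * x))); [|apply Rmult_le_compat_l; lra].
    assert ((lam - h) ^ d * (lam * x) <= lam ^ d * (lam * x)) by (apply Rmult_le_compat_r; nra).
    assert (ex * (lam ^ d - dr * h * lam ^ d1) <= ex * (lam - h) ^ d) by (apply Rmult_le_compat_l; lra).
    rewrite HlSd. nra. }
  assert (dr * dr * lam ^ d1 * P <= dr * dr * lam ^ d1 * (ex * beta))
    by (apply Rmult_le_compat_l; [nra | lra]).
  assert (lam ^ S d * P <= lam ^ S d * (ex * beta)) by (apply Rmult_le_compat_l; lra).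
  assert ((2 * dr - 1) * (ex * (lam ^ d - dr * h * lam ^ d1 - x * lam ^ S d))
          <= (2 * dr - 1) * ((lam - h) ^ d * Z)) by (apply Rmult_le_compat_l; lra).
  pose proof (profile_error_le d1 lam x beta Hd1 lam_nonneg Hx Hbeta) as Herr.
  unfold deficit_profile.
  change (INR (S d1)) with dr in Herr |- *. change (S (S d1)) with (S d) in Herr |- *.
  change (S d1) with d in Herr |- *. fold ex h in Herr |- *.
  replace (dr ^ 2) with (dr * dr) by ring.
  lra.
Qed.

Lemma deficit_ratio_le : x * deficit_const d1 <= 0.05 ->
  / x * (F1 / D) * x ^ d * (P * (B1 * b ^ 4))
    - (/ x - 1) * (F2 / D) * x ^ d * (1 - 2 * x) ^ N / (P * (B1 * b ^ 4))
  <= 0.95.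
Proof.
  intros HxK.
  assert (HD : 1 <= D) by (apply (le_INR 1), lt_O_fact).
  pose proof (deficit_profile_le d1 lam Hd1 lam_nonneg) as Hprof. fold d D in Hprof.
  pose proof bracket_le_profile.
  eapply Rle_trans; [apply deficit_ratio_le_W|].
  eapply Rle_trans; [apply W_bracket_le|].
  apply Rle_trans with (/ D * (0.9 * D + 0.05)); [apply Rmult_le_compat_l; [left; apply Rinv_0_lt_compat|]; lra|].
  replace (/ D * (0.9 * D + 0.05)) with (0.9 + 0.05 * / D) by (field; lra).
  assert (/ D <= 1) by (rewrite <- Rinv_1; apply Rinv_le_contravar; lra).
  lra.
Qed.

End DeficitRatio.

Lemma mu_falling d n m : (d <= n)%nat -> (2 <= m)%nat ->
  mu d n m = / (/ INR m) * (falling (INR n) d / INR (fact d)) * (/ INR m) ^ d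
             * (1 - / INR m) ^ (n - d).
Proof.
  intros Hn Hm. pose proof (INR_ge_2 m Hm).
  unfold mu. rewrite binomR_falling by exact Hn. rewrite Rinv_inv. reflexivity.
Qed.

Lemma pair_moment_falling d n m : (2 * d <= n)%nat -> (2 <= m)%nat ->
  pair_moment d n m = mu d n m *
    ((/ (/ INR m) - 1) * (falling (INR n - INR d) d / INR (fact d)) * (/ INR m) ^ d
     * (1 - 2 * / INR m) ^ (n - 2 * d) / (1 - / INR m) ^ (n - d)).
Proof.
  intros Hn Hm. destruct (inv_INR_half m Hm) as [[Hx Hx2] _].
  assert (Hb : 0 < (1 - / INR m) ^ (n - d)) by (apply pow_lt; lra).
  unfold pair_moment. rewrite mu_falling by (lia || exact Hm).
  rewrite multi2R_binomR, !binomR_falling, minus_INR by lia.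
  rewrite Rinv_inv. set (x := / INR m) in *.
  replace (x ^ (2 * d)) with (x ^ d * x ^ d) by (rewrite <- pow_add; f_equal; lia).
  replace (2 / INR m) with (2 * x) by reflexivity.
  field. pose proof (INR_fact_lt_0 d). split; lra.
Qed.

Lemma mu_le_20_sigma2 d1 n m : (1 <= d1)%nat -> (3 * S d1 + 2 <= n)%nat -> (2 <= m)%nat ->
  20 * deficit_const d1 + 2 * (3 * INR (S d1) + 2) <= INR m ->
  mu (S d1) n m <= 20 * sigma2 (S d1) n m.
Proof.
  intros Hd1 Hn Hm Hlarge.
  set (d := S d1) in *. set (dr := INR d) in *.
  set (E := (n - (3 * d + 2))%nat).
  assert (Hy : INR n = INR E + 3 * dr + 2)
    by (unfold E, dr; rewrite <- (Nat.sub_add (3 * d + 2) n Hn) at 1;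
        rewrite plus_INR, plus_INR, mult_INR; simpl; ring).
  destruct (inv_INR_half m Hm) as [[Hx _] Hmx]. set (x := / INR m) in *.
  pose proof (deficit_const_nonneg d1). pose proof (pos_INR E).
  assert (Hdr : 2 <= dr) by (unfold dr, d; rewrite S_INR; apply (le_INR 1) in Hd1; simpl in Hd1; lra).
  assert (Hx_small : x * (3 * dr + 2) <= 1 / 2)
    by (apply Rmult_le_reg_l with (INR m); [lra|]; rewrite <- Rmult_assoc, Hmx; lra).
  assert (HxK : x * deficit_const d1 <= 0.05)
    by (apply Rmult_le_reg_l with (INR m); [lra|]; rewrite <- Rmult_assoc, Hmx; lra).
  set (F1 := falling (INR n) d). set (F2 := falling (INR n - dr) d).
  destruct (falling_pair_bounds d1 (INR n) ltac:(fold d dr; lra)) as (HF12 & HF2l & HF2u).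
  fold d dr F1 F2 in HF12, HF2l, HF2u. rewrite Hy in HF12, HF2l, HF2u.
  pose proof (deficit_ratio_le d1 E x F1 F2 Hd1 Hx Hx_small HF12 HF2l HF2u HxK) as Hratio.
  assert (Hpow : (1 - x) ^ (n - d) = (1 - x) ^ E * ((1 - x) ^ (2 * d1) * (1 - x) ^ 4))
    by (rewrite <- !pow_add; f_equal; unfold E, d; lia).
  replace (E + d1 + 3)%nat with (n - 2 * d)%nat in Hratio by (unfold E, d; lia).
  rewrite <- Hpow in Hratio. fold d in Hratio.
  assert (Hmu : mu d n m = / x * (F1 / INR (fact d)) * x ^ d * (1 - x) ^ (n - d))
    by (apply mu_falling; unfold d in *; lia).
  rewrite <- Hmu in Hratio.
  set (r := (/ x - 1) * (F2 / INR (fact d)) * x ^ d * (1 - 2 * x) ^ (n - 2 * d) / (1 - x) ^ (n - d))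
    in Hratio.
  assert (Hpair : pair_moment d n m = mu d n m * r)
    by (apply pair_moment_falling; unfold d in *; lia).
  pose proof (mu_nonneg d n m ltac:(unfold d in *; lia) Hm).
  (* sigma^2 = mu (1 - (mu - r)) >= mu / 20 *)
  assert (mu d n m * (mu d n m - r) <= mu d n m * 0.95) by (apply Rmult_le_compat_l; lra).
  rewrite sigma2_pair_moment, Hpair. nra.
Qed.

Lemma n_gt_of_sigma2 d n m Y : (1 <= d)%nat -> (d <= n)%nat -> (2 <= m)%nat -> 0 <= Y ->
  Y ^ d + Y ^ (2 * d) < sigma2 d n m -> Y < INR n.
Proof.
  intros Hd Hn Hm HY Hsig. destruct (Rlt_le_dec Y (INR n)) as [|Hle]; [assumption|].
  pose proof (sigma2_le_pow d n m Hd Hn Hm). pose proof (pos_INR n).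
  assert (INR n ^ d <= Y ^ d) by (apply pow_incr; lra).
  assert (INR n ^ (2 * d) <= Y ^ (2 * d)) by (apply pow_incr; lra).
  lra.
Qed.

Lemma poisson_scale_gt_of_sigma2 d n m q : (2 * d <= n)%nat -> (2 <= m)%nat -> 0 <= q ->
  poisson_envelope d q < sigma2 d n m -> q < poisson_scale d n m.
Proof.
  intros Hn Hm Hq Hsig. destruct (Rlt_le_dec q (poisson_scale d n m)) as [|Hle]; [assumption|].
  pose proof (sigma2_le_poisson d n m Hn Hm). pose proof (poisson_scale_nonneg d n m Hm).
  assert (poisson_scale d n m ^ 2 <= q ^ 2) by (apply pow_incr; lra).
  pose proof (exp_pos (INR d)). pose proof (exp_pos (2 * INR d)).
  unfold poisson_envelope in *. nra.
Qed.

(* The Poisson scale is at most m d^d, so a large variance forces many urns. *)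
Lemma m_gt_of_sigma2 d n m M : (2 * d <= n)%nat -> (2 <= m)%nat -> 0 <= M ->
  poisson_envelope d (M * INR d ^ d) < sigma2 d n m -> M < INR m.
Proof.
  intros Hn Hm HM Hsig. destruct (Rlt_le_dec M (INR m)) as [|Hle]; [assumption|].
  destruct (inv_INR_half m Hm) as [[Hx _] _].
  assert (Hlam : 0 <= INR n / INR m) by (apply Rmult_le_pos; [apply pos_INR | lra]).
  pose proof (exp_neg_mul_pow_le (INR n / INR m) 1 d Hlam ltac:(lra)) as Hpoly.
  rewrite Rmult_1_l, Rdiv_1_r in Hpoly.
  pose proof (poisson_scale_gt_of_sigma2 d n m (M * INR d ^ d) Hn Hm
                ltac:(apply Rmult_le_pos; [lra | apply pow_le, pos_INR]) Hsig).
  unfold poisson_scale in *.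
  assert (INR m * ((INR n / INR m) ^ d * exp (- (INR n / INR m))) <= M * INR d ^ d)
    by (apply Rmult_le_compat; [apply pos_INR | apply Rmult_le_pos; [apply pow_le | left; apply exp_pos] | | rewrite Rmult_comm]; lra).
  lra.
Qed.

(* If lam = n/m exceeds (1 + eps) ln m, then m e^{-lam} <= e^{-c lam} with
   c = eps/(1 + eps), so the Poisson scale is bounded by (d/c)^d. *)
Lemma ratio_le_of_sigma2 d n m eps : (2 * d <= n)%nat -> (2 <= m)%nat -> 0 < eps ->
  poisson_envelope d ((INR d / (eps / (1 + eps))) ^ d) < sigma2 d n m ->
  INR n / INR m <= (1 + eps) * ln (INR m).
Proof.
  intros Hn Hm Heps Hsig.
  set (lam := INR n / INR m). set (c := eps / (1 + eps)).
  destruct (Rle_lt_dec lam ((1 + eps) * ln (INR m))) as [|Hgt]; [assumption|]. exfalso.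
  pose proof (INR_ge_2 m Hm). destruct (inv_INR_half m Hm) as [[Hx _] _].
  assert (Hc : 0 < c) by (apply Rdiv_lt_0_compat; lra).
  assert (Hlam : 0 <= lam) by (apply Rmult_le_pos; [apply pos_INR | lra]).
  assert (Hq : 0 <= (INR d / c) ^ d)
    by (apply pow_le, Rmult_le_pos; [apply pos_INR | left; apply Rinv_0_lt_compat; lra]).
  pose proof (poisson_scale_gt_of_sigma2 d n m _ Hn Hm Hq Hsig) as Hbig.
  assert (Hcl : c * lam <= lam - ln (INR m)).
  { assert (ln (INR m) <= lam / (1 + eps))
      by (apply Rmult_le_reg_l with (1 + eps); [lra|]; field_simplify; lra).
    unfold c. replace (eps / (1 + eps) * lam) with (lam - lam / (1 + eps)) by (field; lra). lra. }
  assert (poisson_scale d n m <= exp (- (c * lam)) * lam ^ d).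
  { unfold poisson_scale. fold lam. rewrite <- (exp_ln (INR m)) at 1 by lra.
    replace (exp (ln (INR m)) * lam ^ d * exp (- lam)) with (exp (- (lam - ln (INR m))) * lam ^ d)
      by (replace (- (lam - ln (INR m))) with (ln (INR m) + - lam) by ring; rewrite exp_plus; ring).
    apply Rmult_le_compat_r; [apply pow_le; lra | apply exp_le_mono; lra]. }
  pose proof (exp_neg_mul_pow_le lam c d Hlam Hc). lra.
Qed.

Theorem lemma3p1 (d : nat) (hd : (2 <= d)%nat) :
  forall (nstar mstar eps : R), 0 < eps ->
  exists r1 C : R, 0 < r1 /\ 0 < C /\
    forall n m : nat, (d <= n)%nat -> (2 <= m)%nat ->
      r1 <= sigma2 d n m ->
      (nstar < INR n /\ mstar < INR m) /\
      INR n / INR m <= (1 + eps) * ln (INR m) /\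
      mu d n m <= C * sigma2 d n m.
Proof.
  intros nstar mstar eps Heps. destruct d as [|d1]; [lia|].
  pose proof (pos_INR (S d1)). pose proof (deficit_const_nonneg d1). set (dr := INR (S d1)) in *.
  (* thresholds: n > Y gives n > nstar and n >= 3d + 2; m > M gives m > mstar and m large *)
  set (Y := Rabs nstar + 3 * dr + 2).
  set (M := Rabs mstar + 20 * deficit_const d1 + 2 * (3 * dr + 2)).
  set (qM := M * dr ^ S d1). set (qE := (dr / (eps / (1 + eps))) ^ S d1).
  assert (HY0 : 0 <= Y) by (pose proof (Rabs_pos nstar); unfold Y; lra).
  assert (HM0 : 0 <= M) by (pose proof (Rabs_pos mstar); unfold M; lra).
  assert (HY : 0 <= Y ^ S d1 + Y ^ (2 * S d1)) by (apply Rplus_le_le_0_compat; apply pow_le; lra).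
  pose proof (poisson_envelope_nonneg (S d1) qM ltac:(apply Rmult_le_pos; [lra | apply pow_le; lra])).
  pose proof (poisson_envelope_nonneg (S d1) qE
                ltac:(apply pow_le, Rmult_le_pos; [lra | left; apply Rinv_0_lt_compat, Rdiv_lt_0_compat; lra])).
  exists (1 + (Y ^ S d1 + Y ^ (2 * S d1)) + poisson_envelope (S d1) qM + poisson_envelope (S d1) qE), 20.
  split; [lra|]. split; [lra|]. intros n m Hn Hm Hsig.
  assert (HnY : Y < INR n) by (apply (n_gt_of_sigma2 (S d1) n m); lia || lra).
  assert (Hn3 : (3 * S d1 + 2 <= n)%nat)
    by (apply INR_le; rewrite plus_INR, mult_INR; simpl (INR 3); simpl (INR 2); fold dr;
        pose proof (Rabs_pos nstar); unfold Y in HnY; lra).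
  assert (HmM : M < INR m) by (apply (m_gt_of_sigma2 (S d1) n m); [lia | lia | lra | fold dr qM; lra]).
  unfold Y in HnY. unfold M in HmM.
  split; [split|split].
  - pose proof (Rle_abs nstar). lra.
  - pose proof (Rle_abs mstar). lra.
  - apply (ratio_le_of_sigma2 (S d1) n m eps); [lia | lia | lra | fold dr qE; lra].
  - apply mu_le_20_sigma2; [lia | lia | lia | fold dr; pose proof (Rabs_pos mstar); lra].
Qed.
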